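(* Let $\bar{w}$ be a nice sequence. Then: (1) $(x\;\bar{w}) \in \mathcal{N}$ for every $\lambda$-variable $x$. (2) If $u \in \mathcal{N}$ and $(t[x:=u]\;\bar{w}) \in \mathcal{N}$, then $((\lambda x.t\;u)\;\bar{w}) \in \mathcal{N}$. (3) If $t_1,t_2 \in \mathcal{N}$ and $(t_i\;\bar{w}) \in \mathcal{N}$ (for $i\in\{1,2\}$), then $((\langle t_1,t_2\rangle\;\pi_i)\;\bar{w}) \in \mathcal{N}$. (4) If $t,u_1,u_2 \in \mathcal{N}$ and $u_i[x_i:=t] \in \mathcal{N}$ (for $i\in\{1,2\}$), then $(\omega_i t\;[x_1.u_1,x_2.u_2]) \in \mathcal{N}$. (5) If $t[a:=^*\bar{w}] \in \mathcal{N}$, then $(\mu a.t\;\bar{w}) \in \mathcal{N}$.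
   Context: With disjoint sets of $\lambda$-variables $x,y,\dots$ and $\mu$-variables $a,b,\dots$, terms and $\mathcal{E}$-terms are $\mathcal{T} ::= x \mid \lambda x.\mathcal{T} \mid (\mathcal{T}\;\mathcal{E}) \mid \langle \mathcal{T},\mathcal{T}\rangle \mid \omega_1\mathcal{T} \mid \omega_2\mathcal{T} \mid \mu a.\mathcal{T} \mid (a\;\mathcal{T})$, $\mathcal{E} ::= \mathcal{T} \mid \pi_1 \mid \pi_2 \mid [x.\mathcal{T}, y.\mathcal{T}]$ (up to renaming of bound variables). The one-step reduction $\triangleright$ is the closure under all constructors of: $(\lambda x.u\;v)\triangleright u[x:=v]$; $(\langle t_1,t_2\rangle\;\pi_i)\triangleright t_i$; $(\omega_i t\;[x_1.u_1,x_2.u_2])\triangleright u_i[x_i:=t]$; $((t\;[x_1.u_1,x_2.u_2])\;\varepsilon)\triangleright(t\;[x_1.(u_1\;\varepsilon),x_2.(u_2\;\varepsilon)])$; $(\mu a.t\;\varepsilon)\triangleright\mu a.t[a:=^*\varepsilon]$, where $t[a:=^*\varepsilon]$ replaces inductively each subterm $(a\;v)$ by $(a\;(v\;\varepsilon))$. $\mathcal{N}$ (resp. $\mathcal{N}'$) is the set of strongly normalizable terms (resp. $\mathcal{E}$-terms), i.e. those admitting no infinite $\triangleright$-reduction sequence. For a finite sequence $\bar{w}=w_1\dots w_n$ of $\mathcal{E}$-terms and a term $t$: $(t\;\bar{w})$ is $t$ if $n=0$ and $((t\;w_1)\;w_2\dots w_n)$ otherwise; $t[a:=^*\bar{w}]$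 is obtained from $t$ by replacing inductively each subterm $(a\;v)$ by $(a\;(v\;\bar{w}))$. A finite sequence $\bar{w}=w_1\dots w_n$ of elements of $\mathcal{N}'$ is a nice sequence iff none of $w_1,\dots,w_{n-1}$ is of the form $[x.u,y.v]$ (only $w_n$ may be). *)

(* Lambda-mu calculus with pairs and sums, de Bruijn indices.
   lambda-variables and mu-variables live in two separate index spaces. *)
From Stdlib Require Import List Arith.
Import ListNotations.

Inductive term : Type :=
| Var  : nat -> term
| Lam  : term -> term
| App  : term -> eterm -> term
| Pair : term -> term -> term
| Inj1 : term -> term
| Inj2 : term -> term
| Mu   : term -> term                (* binds mu-index 0 *)
| MApp : nat -> term -> term         (* (a t), a a mu-variable index *)
with eterm : Type :=
| ETerm : term -> eterm
| Proj1 : eterm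
| Proj2 : eterm
| Case  : term -> term -> eterm.     (* [x.u1, y.u2]; each branch binds lambda-index 0 *)

Fixpoint lift_l (c : nat) (t : term) : term :=
  match t with
  | Var n => if c <=? n then Var (S n) else Var n
  | Lam t => Lam (lift_l (S c) t)
  | App t e => App (lift_l c t) (lift_le c e)
  | Pair t1 t2 => Pair (lift_l c t1) (lift_l c t2)
  | Inj1 t => Inj1 (lift_l c t)
  | Inj2 t => Inj2 (lift_l c t)
  | Mu t => Mu (lift_l c t)
  | MApp a t => MApp a (lift_l c t)
  end
with lift_le (c : nat) (e : eterm) : eterm :=
  match e with
  | ETerm t => ETerm (lift_l c t)
  | Proj1 => Proj1
  | Proj2 => Proj2
  | Case u1 u2 => Case (lift_l (S c) u1) (lift_l (S c) u2)
  end.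

Fixpoint lift_m (c : nat) (t : term) : term :=
  match t with
  | Var n => Var n
  | Lam t => Lam (lift_m c t)
  | App t e => App (lift_m c t) (lift_me c e)
  | Pair t1 t2 => Pair (lift_m c t1) (lift_m c t2)
  | Inj1 t => Inj1 (lift_m c t)
  | Inj2 t => Inj2 (lift_m c t)
  | Mu t => Mu (lift_m (S c) t)
  | MApp a t => MApp (if c <=? a then S a else a) (lift_m c t)
  end
with lift_me (c : nat) (e : eterm) : eterm :=
  match e with
  | ETerm t => ETerm (lift_m c t)
  | Proj1 => Proj1
  | Proj2 => Proj2
  | Case u1 u2 => Case (lift_m c u1) (lift_m c u2)
  end.

(* t[k := u] : capture-avoiding substitution of u for lambda-index k,
   removing the binder (indices above k decrease by one) *)
Fixpoint subst_l (k : nat) (u : term) (t : term) : term :=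
  match t with
  | Var n => if n =? k then u else if k <? n then Var (pred n) else Var n
  | Lam t => Lam (subst_l (S k) (lift_l 0 u) t)
  | App t e => App (subst_l k u t) (subst_le k u e)
  | Pair t1 t2 => Pair (subst_l k u t1) (subst_l k u t2)
  | Inj1 t => Inj1 (subst_l k u t)
  | Inj2 t => Inj2 (subst_l k u t)
  | Mu t => Mu (subst_l k (lift_m 0 u) t)
  | MApp a t => MApp a (subst_l k u t)
  end
with subst_le (k : nat) (u : term) (e : eterm) : eterm :=
  match e with
  | ETerm t => ETerm (subst_l k u t)
  | Proj1 => Proj1
  | Proj2 => Proj2
  | Case u1 u2 => Case (subst_l (S k) (lift_l 0 u) u1) (subst_l (S k) (lift_l 0 u) u2)
  end.

Definition apps (t : term) (ws : list eterm) : term := fold_left App ws t.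

(* t[a :=* ws] : replace inductively every subterm (a v) by (a (v ws)),
   where a is mu-index k; the mu-variable a stays (it is not removed). *)
Fixpoint msubst (k : nat) (ws : list eterm) (t : term) : term :=
  match t with
  | Var n => Var n
  | Lam t => Lam (msubst k (map (lift_le 0) ws) t)
  | App t e => App (msubst k ws t) (msubst_e k ws e)
  | Pair t1 t2 => Pair (msubst k ws t1) (msubst k ws t2)
  | Inj1 t => Inj1 (msubst k ws t)
  | Inj2 t => Inj2 (msubst k ws t)
  | Mu t => Mu (msubst (S k) (map (lift_me 0) ws) t)
  | MApp a t => if a =? k then MApp a (apps (msubst k ws t) ws)
                else MApp a (msubst k ws t)
  end
with msubst_e (k : nat) (ws : list eterm) (e : eterm) : eterm :=
  match e with
  | ETerm t => ETerm (msubst k ws t)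
  | Proj1 => Proj1
  | Proj2 => Proj2
  | Case u1 u2 => Case (msubst k (map (lift_le 0) ws) u1) (msubst k (map (lift_le 0) ws) u2)
  end.

Inductive red : term -> term -> Prop :=
| r_beta  : forall u v, red (App (Lam u) (ETerm v)) (subst_l 0 v u)
| r_pi1   : forall t1 t2, red (App (Pair t1 t2) Proj1) t1
| r_pi2   : forall t1 t2, red (App (Pair t1 t2) Proj2) t2
| r_case1 : forall t u1 u2, red (App (Inj1 t) (Case u1 u2)) (subst_l 0 t u1)
| r_case2 : forall t u1 u2, red (App (Inj2 t) (Case u1 u2)) (subst_l 0 t u2)
| r_comm  : forall t u1 u2 e,
    red (App (App t (Case u1 u2)) e)
        (App t (Case (App u1 (lift_le 0 e)) (App u2 (lift_le 0 e))))
| r_mu    : forall t e, red (App (Mu t) e) (Mu (msubst 0 [lift_me 0 e] t))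
| c_lam   : forall t t', red t t' -> red (Lam t) (Lam t')
| c_appl  : forall t t' e, red t t' -> red (App t e) (App t' e)
| c_appr  : forall t e e', rede e e' -> red (App t e) (App t e')
| c_pairl : forall t1 t1' t2, red t1 t1' -> red (Pair t1 t2) (Pair t1' t2)
| c_pairr : forall t1 t2 t2', red t2 t2' -> red (Pair t1 t2) (Pair t1 t2')
| c_inj1  : forall t t', red t t' -> red (Inj1 t) (Inj1 t')
| c_inj2  : forall t t', red t t' -> red (Inj2 t) (Inj2 t')
| c_mu    : forall t t', red t t' -> red (Mu t) (Mu t')
| c_mapp  : forall a t t', red t t' -> red (MApp a t) (MApp a t')
with rede : eterm -> eterm -> Prop :=
| c_eterm : forall t t', red t t' -> rede (ETerm t) (ETerm t')
| c_casel : forall u1 u1' u2, red u1 u1' -> rede (Case u1 u2) (Case u1' u2)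
| c_caser : forall u1 u2 u2', red u2 u2' -> rede (Case u1 u2) (Case u1 u2').

Definition SN (t : term) : Prop := Acc (fun u v => red v u) t.
Definition SN' (e : eterm) : Prop := Acc (fun u v => rede v u) e.

Definition is_case (e : eterm) : bool :=
  match e with Case _ _ => true | _ => false end.

Definition nice (ws : list eterm) : Prop :=
  Forall SN' ws /\
  (forall i, S i < length ws -> is_case (nth i ws Proj1) = false).

(* i = true stands for index 1, i = false for index 2 *)
Definition proj (i : bool) : eterm := if i then Proj1 else Proj2.
Definition inj (i : bool) (t : term) : term := if i then Inj1 t else Inj2 t.
Definition pick {A} (i : bool) (a1 a2 : A) : A := if i then a1 else a2.

From Stdlib Require Import List Arith Lia Relations Wf_nat.
Import ListNotations.

(* Since only the last element of a nice sequence may be a case, a step of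
   [(h w_1 ... w_n)] reduces [h], reduces some [w_i], or contracts a redex made
   of [h] and [w_1] (a commutation inside the spine would need an inner case).
   Clauses (1)-(4) then follow by induction on the strong normalisation of the
   components, using that reduction is stable under substitution.  For (5),
   contracting [(mu a.t w_1)] gives [(mu a.t[a:=*w_1] w_2 ... w_n)], and
   [t[a:=*w_1][a:=*w_2...w_n] = t[a:=*w_1...w_n]], so one also inducts on [n]. *)

Scheme term_ind_mut := Induction for term Sort Prop
with eterm_ind_mut := Induction for eterm Sort Prop.
Combined Scheme term_eterm_ind from term_ind_mut, eterm_ind_mut.

Ltac case_indices :=
  repeat (cbn -[Nat.leb Nat.eqb Nat.ltb]; match goal with
  | |- context [?a <=? ?b] => destruct (Nat.leb_spec a b)
  | |- context [?a =? ?b] => destruct (Nat.eqb_spec a b)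
  | |- context [?a <? ?b] => destruct (Nat.ltb_spec a b)
  end).

Ltac solve_indices :=
  case_indices; try reflexivity; try (exfalso; lia); try (f_equal; lia).

Ltac use_eq L := first [apply L; lia | symmetry; apply L; lia | apply L | symmetry; apply L].

Ltac decide_index_eqs :=
  repeat match goal with
  | |- context [?a =? ?b] =>
      (replace (a =? b) with false by (symmetry; apply Nat.eqb_neq; lia)) ||
      (replace (a =? b) with true by (symmetry; apply Nat.eqb_eq; lia))
  end.

Ltac map_eq L := rewrite ?map_map; apply map_ext; intro; use_eq (proj2 L).

Lemma lift_l_lift_l :
  (forall t c d, c <= d -> lift_l (S d) (lift_l c t) = lift_l c (lift_l d t)) /\
  (forall e c d, c <= d -> lift_le (S d) (lift_le c e) = lift_le c (lift_le d e)).
Proof.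
  apply term_eterm_ind; intros; cbn -[Nat.leb]; try solve_indices;
    f_equal; try (apply H; lia); apply H0; lia.
Qed.

Lemma lift_m_lift_m :
  (forall t c d, c <= d -> lift_m (S d) (lift_m c t) = lift_m c (lift_m d t)) /\
  (forall e c d, c <= d -> lift_me (S d) (lift_me c e) = lift_me c (lift_me d e)).
Proof.
  apply term_eterm_ind; intros; cbn -[Nat.leb]; try solve_indices;
    f_equal; try (apply H; lia); try (apply H0; lia); solve_indices.
Qed.

Lemma lift_l_lift_m :
  (forall t c d, lift_l c (lift_m d t) = lift_m d (lift_l c t)) /\
  (forall e c d, lift_le c (lift_me d e) = lift_me d (lift_le c e)).
Proof.
  apply term_eterm_ind; intros; cbn -[Nat.leb]; try solve_indices; f_equal; auto.
Qed.

Lemma subst_l_lift_l :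
  (forall t j v, subst_l j v (lift_l j t) = t) /\
  (forall e j v, subst_le j v (lift_le j e) = e).
Proof.
  apply term_eterm_ind; intros; cbn -[Nat.leb]; try solve_indices; f_equal; auto.
Qed.

Lemma lift_l_subst_l_below :
  (forall t c j v, c <= j ->
     lift_l c (subst_l j v t) = subst_l (S j) (lift_l c v) (lift_l c t)) /\
  (forall e c j v, c <= j ->
     lift_le c (subst_le j v e) = subst_le (S j) (lift_l c v) (lift_le c e)).
Proof.
  apply term_eterm_ind; intros; cbn -[Nat.leb Nat.eqb Nat.ltb]; try (f_equal; auto; fail).
  - solve_indices; destruct n; solve_indices.
  - f_equal. rewrite H by lia. f_equal. use_eq (proj1 lift_l_lift_l).
  - f_equal. rewrite H by lia. f_equal. use_eq (proj1 lift_l_lift_m).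
  - f_equal; [rewrite H by lia | rewrite H0 by lia]; f_equal; use_eq (proj1 lift_l_lift_l).
Qed.

Lemma lift_l_subst_l_above :
  (forall t c j v, j <= c ->
     lift_l c (subst_l j v t) = subst_l j (lift_l c v) (lift_l (S c) t)) /\
  (forall e c j v, j <= c ->
     lift_le c (subst_le j v e) = subst_le j (lift_l c v) (lift_le (S c) e)).
Proof.
  apply term_eterm_ind; intros; cbn -[Nat.leb Nat.eqb Nat.ltb]; try (f_equal; auto; fail).
  - solve_indices; destruct n; solve_indices.
  - f_equal. rewrite H by lia. f_equal. use_eq (proj1 lift_l_lift_l).
  - f_equal. rewrite H by lia. f_equal. use_eq (proj1 lift_l_lift_m).
  - f_equal; [rewrite H by lia | rewrite H0 by lia]; f_equal; use_eq (proj1 lift_l_lift_l).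
Qed.

Lemma lift_m_subst_l :
  (forall t c j v, lift_m c (subst_l j v t) = subst_l j (lift_m c v) (lift_m c t)) /\
  (forall e c j v, lift_me c (subst_le j v e) = subst_le j (lift_m c v) (lift_me c e)).
Proof.
  apply term_eterm_ind; intros; cbn -[Nat.leb Nat.eqb Nat.ltb]; try (f_equal; auto; fail).
  - solve_indices.
  - f_equal. rewrite H. f_equal. use_eq (proj1 lift_l_lift_m).
  - f_equal. rewrite H. f_equal. use_eq (proj1 lift_m_lift_m).
  - f_equal; [rewrite H | rewrite H0]; f_equal; use_eq (proj1 lift_l_lift_m).
Qed.

Lemma subst_l_subst_l :
  (forall t i j u v, j <= i ->
     subst_l i u (subst_l j v t) = subst_l j (subst_l i u v) (subst_l (S i) (lift_l j u) t)) /\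
  (forall e i j u v, j <= i ->
     subst_le i u (subst_le j v e) = subst_le j (subst_l i u v) (subst_le (S i) (lift_l j u) e)).
Proof.
  apply term_eterm_ind; intros; cbn -[Nat.leb Nat.eqb Nat.ltb]; try (f_equal; auto; fail).
  - solve_indices. subst. symmetry. apply (proj1 subst_l_lift_l).
  - f_equal. rewrite H by lia. f_equal.
    + use_eq (proj1 lift_l_subst_l_below).
    + f_equal. use_eq (proj1 lift_l_lift_l).
  - f_equal. rewrite H by lia. f_equal.
    + use_eq (proj1 lift_m_subst_l).
    + f_equal. use_eq (proj1 lift_l_lift_m).
  - f_equal; [rewrite H by lia | rewrite H0 by lia]; f_equal;
      try use_eq (proj1 lift_l_subst_l_below); f_equal; use_eq (proj1 lift_l_lift_l).
Qed.

Lemma lift_l_apps ws t c : lift_l c (apps t ws) = apps (lift_l c t) (map (lift_le c) ws).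
Proof. revert t; induction ws; intros; simpl; auto. Qed.

Lemma lift_m_apps ws t c : lift_m c (apps t ws) = apps (lift_m c t) (map (lift_me c) ws).
Proof. revert t; induction ws; intros; simpl; auto. Qed.

Lemma subst_l_apps ws t j v :
  subst_l j v (apps t ws) = apps (subst_l j v t) (map (subst_le j v) ws).
Proof. revert t; induction ws; intros; simpl; auto. Qed.

Lemma msubst_apps ws t k vs :
  msubst k vs (apps t ws) = apps (msubst k vs t) (map (msubst_e k vs) ws).
Proof. revert t; induction ws; intros; simpl; auto. Qed.

Lemma apps_app t ws vs : apps (apps t ws) vs = apps t (ws ++ vs).
Proof. unfold apps; rewrite fold_left_app; reflexivity. Qed.

Lemma lift_l_msubst :
  (forall t c k ws, lift_l c (msubst k ws t) = msubst k (map (lift_le c) ws) (lift_l c t)) /\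
  (forall e c k ws, lift_le c (msubst_e k ws e) = msubst_e k (map (lift_le c) ws) (lift_le c e)).
Proof.
  apply term_eterm_ind; intros; cbn -[Nat.leb Nat.eqb Nat.ltb]; try (f_equal; auto; fail).
  - solve_indices.
  - f_equal. rewrite H. f_equal. map_eq lift_l_lift_l.
  - f_equal. rewrite H. f_equal. map_eq lift_l_lift_m.
  - destruct (n =? k); simpl; f_equal; rewrite ?lift_l_apps, H; auto.
  - f_equal; [rewrite H | rewrite H0]; f_equal; map_eq lift_l_lift_l.
Qed.

Definition lift_index (c k : nat) : nat := if c <=? k then S k else k.

Lemma lift_m_msubst :
  (forall t c k ws, lift_m c (msubst k ws t) =
     msubst (lift_index c k) (map (lift_me c) ws) (lift_m c t)) /\
  (forall e c k ws, lift_me c (msubst_e k ws e) =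
     msubst_e (lift_index c k) (map (lift_me c) ws) (lift_me c e)).
Proof.
  unfold lift_index.
  apply term_eterm_ind; intros; cbn -[Nat.leb Nat.eqb Nat.ltb]; try (f_equal; auto; fail).
  - f_equal. rewrite H. f_equal. map_eq lift_l_lift_m.
  - f_equal. rewrite H. case_indices; try (exfalso; lia); f_equal; map_eq lift_m_lift_m.
  - destruct (Nat.eqb_spec n k); cbn -[Nat.leb Nat.eqb]; rewrite ?lift_m_apps, H; solve_indices.
  - f_equal; [rewrite H | rewrite H0]; f_equal; map_eq lift_l_lift_m.
Qed.

Lemma msubst_lift_m :
  (forall t k ws, msubst k ws (lift_m k t) = lift_m k t) /\
  (forall e k ws, msubst_e k ws (lift_me k e) = lift_me k e).
Proof.
  apply term_eterm_ind; intros; cbn -[Nat.leb Nat.eqb Nat.ltb]; try (f_equal; auto; fail).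
  solve_indices; f_equal; auto.
Qed.

Lemma map_msubst_lift_m vs k ws :
  map (msubst_e k ws) (map (lift_me k) vs) = map (lift_me k) vs.
Proof. rewrite map_map; apply map_ext; intro; apply msubst_lift_m. Qed.

Lemma map_lift_le_lift_me vs j :
  map (lift_le 0) (map (lift_me j) vs) = map (lift_me j) (map (lift_le 0) vs).
Proof. map_eq lift_l_lift_m. Qed.

Lemma map_lift_me_lift_me vs j :
  map (lift_me 0) (map (lift_me j) vs) = map (lift_me (S j)) (map (lift_me 0) vs).
Proof. map_eq lift_m_lift_m. Qed.

Lemma msubst_msubst_comm :
  (forall t j k vs ws, j <= k ->
     msubst (S k) (map (lift_me j) vs) (msubst j ws t) =
     msubst j (map (msubst_e (S k) (map (lift_me j) vs)) ws)
              (msubst (S k) (map (lift_me j) vs) t)) /\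
  (forall e j k vs ws, j <= k ->
     msubst_e (S k) (map (lift_me j) vs) (msubst_e j ws e) =
     msubst_e j (map (msubst_e (S k) (map (lift_me j) vs)) ws)
                (msubst_e (S k) (map (lift_me j) vs) e)).
Proof.
  apply term_eterm_ind; intros; cbn -[Nat.leb Nat.eqb Nat.ltb]; try (f_equal; auto; fail).
  - f_equal.
    rewrite map_lift_le_lift_me.
    rewrite H by lia. f_equal. rewrite !map_map. apply map_ext; intro.
    rewrite (proj2 lift_l_msubst). f_equal. map_eq lift_l_lift_m.
  - f_equal.
    rewrite map_lift_me_lift_me.
    rewrite H by lia. f_equal. rewrite !map_map. apply map_ext; intro.
    rewrite (proj2 lift_m_msubst). unfold lift_index; simpl. f_equal. map_eq lift_m_lift_m.
  - destruct (Nat.eqb_spec n j).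
    + subst. decide_index_eqs. cbn -[Nat.leb Nat.eqb Nat.ltb]. decide_index_eqs. rewrite msubst_apps, H by lia. reflexivity.
    + destruct (Nat.eqb_spec n (S k)).
      * subst. cbn -[Nat.leb Nat.eqb Nat.ltb]. decide_index_eqs.
        rewrite msubst_apps, map_msubst_lift_m, H by lia. reflexivity.
      * cbn -[Nat.leb Nat.eqb Nat.ltb]. decide_index_eqs. rewrite H by lia. reflexivity.
  - rewrite map_lift_le_lift_me.
    f_equal; (rewrite H by lia) || (rewrite H0 by lia); f_equal; rewrite !map_map; apply map_ext; intro;
    rewrite (proj2 lift_l_msubst); f_equal; map_eq lift_l_lift_m.
Qed.

Lemma msubst_msubst_app :
  (forall t j vs ws, msubst j ws (msubst j (map (lift_me j) vs) t) = msubst j (map (lift_me j) vs ++ ws) t) /\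
  (forall e j vs ws, msubst_e j ws (msubst_e j (map (lift_me j) vs) e) = msubst_e j (map (lift_me j) vs ++ ws) e).
Proof.
  apply term_eterm_ind; intros; cbn -[Nat.leb Nat.eqb Nat.ltb]; try (f_equal; auto; fail).
  - f_equal.
    rewrite map_lift_le_lift_me.
    rewrite H, map_app. f_equal. f_equal. map_eq lift_l_lift_m.
  - f_equal.
    rewrite map_lift_me_lift_me.
    rewrite H, map_app. f_equal. f_equal. map_eq lift_m_lift_m.
  - destruct (Nat.eqb_spec n j); cbn -[Nat.leb Nat.eqb Nat.ltb]; decide_index_eqs.
    + rewrite msubst_apps, map_msubst_lift_m, H, apps_app. reflexivity.
    + rewrite H; reflexivity.
  - rewrite map_lift_le_lift_me.
    rewrite H, H0, map_app. f_equal; f_equal; f_equal; map_eq lift_l_lift_m.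
Qed.

Lemma map_subst_le_lift_le ws j v : map (subst_le j v) (map (lift_le j) ws) = ws.
Proof.
  rewrite map_map. rewrite <- (map_id ws) at 2. apply map_ext; intro; apply subst_l_lift_l.
Qed.

Lemma msubst_subst_l :
  (forall t k j v ws, msubst k ws (subst_l j v t) =
     subst_l j (msubst k ws v) (msubst k (map (lift_le j) ws) t)) /\
  (forall e k j v ws, msubst_e k ws (subst_le j v e) =
     subst_le j (msubst k ws v) (msubst_e k (map (lift_le j) ws) e)).
Proof.
  apply term_eterm_ind; intros; cbn -[Nat.leb Nat.eqb Nat.ltb]; try (f_equal; auto; fail).
  - solve_indices.
  - f_equal. rewrite H. f_equal.
    + use_eq (proj1 lift_l_msubst).
    + f_equal. map_eq lift_l_lift_l.
  - f_equal. rewrite H. f_equal.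
    + use_eq (proj1 lift_m_msubst).
    + f_equal. map_eq lift_l_lift_m.
  - destruct (Nat.eqb_spec n k); cbn -[Nat.leb Nat.eqb Nat.ltb].
    + rewrite subst_l_apps, map_subst_le_lift_le, H. reflexivity.
    + rewrite H. reflexivity.
  - f_equal; (rewrite H || rewrite H0); f_equal; try use_eq (proj1 lift_l_msubst);
      f_equal; map_eq lift_l_lift_l.
Qed.

Lemma subst_l_msubst :
  (forall t j v k ws, subst_l j (lift_m k v) (msubst k ws t) =
     msubst k (map (subst_le j (lift_m k v)) ws) (subst_l j (lift_m k v) t)) /\
  (forall e j v k ws, subst_le j (lift_m k v) (msubst_e k ws e) =
     msubst_e k (map (subst_le j (lift_m k v)) ws) (subst_le j (lift_m k v) e)).
Proof.
  apply term_eterm_ind; intros; cbn -[Nat.leb Nat.eqb Nat.ltb]; try (f_equal; auto; fail).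
  - solve_indices. symmetry; apply msubst_lift_m.
  - f_equal. rewrite (proj1 lift_l_lift_m), H. f_equal. rewrite !map_map; apply map_ext; intro.
    rewrite (proj2 lift_l_subst_l_below) by lia. f_equal. use_eq (proj1 lift_l_lift_m).
  - f_equal.
    replace (lift_m 0 (lift_m k v)) with (lift_m (S k) (lift_m 0 v)) by use_eq (proj1 lift_m_lift_m).
    rewrite H. f_equal. rewrite !map_map; apply map_ext; intro.
    rewrite (proj2 lift_m_subst_l). f_equal. use_eq (proj1 lift_m_lift_m).
  - destruct (Nat.eqb_spec n k); cbn -[Nat.leb Nat.eqb Nat.ltb].
    + rewrite subst_l_apps, H. reflexivity.
    + rewrite H. reflexivity.
  - f_equal; rewrite (proj1 lift_l_lift_m); (rewrite H || rewrite H0); f_equal;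
      rewrite !map_map; apply map_ext; intro;
      rewrite (proj2 lift_l_subst_l_below) by lia; f_equal; use_eq (proj1 lift_l_lift_m).
Qed.

Scheme red_ind_mut := Induction for red Sort Prop
with rede_ind_mut := Induction for rede Sort Prop.
Combined Scheme red_rede_ind from red_ind_mut, rede_ind_mut.

Notation star := (clos_refl_trans term red).
Notation stare := (clos_refl_trans eterm rede).

Lemma clos_refl_trans_map {A B} (R : relation A) (R' : relation B) (f : A -> B) :
  (forall x y, R x y -> R' (f x) (f y)) ->
  forall x y, clos_refl_trans A R x y -> clos_refl_trans B R' (f x) (f y).
Proof. intros Hf x y H; induction H; eauto using rt_step, rt_refl, rt_trans. Qed.

Ltac star_congr f :=
  eapply (clos_refl_trans_map _ _ f); [intros ? ? Hxy; constructor; exact Hxy |].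

Inductive red_seq : list eterm -> list eterm -> Prop :=
| red_seq_head w w' ws : rede w w' -> red_seq (w :: ws) (w' :: ws)
| red_seq_tail w ws ws' : red_seq ws ws' -> red_seq (w :: ws) (w :: ws').

Lemma red_apps ws t t' : red t t' -> red (apps t ws) (apps t' ws).
Proof. revert t t'; induction ws; intros; simpl; auto using c_appl. Qed.

Lemma star_apps ws t t' : star t t' -> star (apps t ws) (apps t' ws).
Proof. apply (clos_refl_trans_map _ _ (fun z => apps z ws)); auto using red_apps. Qed.

Lemma red_apps_seq ws ws' t : red_seq ws ws' -> red (apps t ws) (apps t ws').
Proof.
  intros H; revert t; induction H; intros; simpl; auto using red_apps, c_appr.
Qed.

Lemma red_seq_map f :
  (forall e e', rede e e' -> rede (f e) (f e')) ->
  forall ws ws', red_seq ws ws' -> red_seq (map f ws) (map f ws').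
Proof. intros Hf ws ws' H; induction H; simpl; constructor; auto. Qed.

Lemma red_lift_l :
  (forall t t', red t t' -> forall c, red (lift_l c t) (lift_l c t')) /\
  (forall e e', rede e e' -> forall c, rede (lift_le c e) (lift_le c e')).
Proof.
  apply red_rede_ind; intros; simpl; try (constructor; auto; fail).
  1-3: rewrite (proj1 lift_l_subst_l_above) by lia; constructor.
  - rewrite (proj2 lift_l_lift_l) by lia. constructor.
  - rewrite (proj1 lift_l_msubst). simpl. rewrite (proj2 lift_l_lift_m). constructor.
Qed.

Lemma red_lift_m :
  (forall t t', red t t' -> forall c, red (lift_m c t) (lift_m c t')) /\
  (forall e e', rede e e' -> forall c, rede (lift_me c e) (lift_me c e')).
Proof.
  apply red_rede_ind; intros; simpl; try (constructor; auto; fail).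
  1-3: rewrite (proj1 lift_m_subst_l); constructor.
  - rewrite <- (proj2 lift_l_lift_m). constructor.
  - rewrite (proj1 lift_m_msubst). simpl. unfold lift_index; simpl.
    rewrite (proj2 lift_m_lift_m) by lia. constructor.
Qed.

Lemma red_subst_l :
  (forall t t', red t t' -> forall j v, red (subst_l j v t) (subst_l j v t')) /\
  (forall e e', rede e e' -> forall j v, rede (subst_le j v e) (subst_le j v e')).
Proof.
  apply red_rede_ind; intros; simpl; try (constructor; auto; fail).
  1-3: rewrite (proj1 subst_l_subst_l) by lia; constructor.
  - rewrite <- (proj2 lift_l_subst_l_below) by lia. constructor.
  - rewrite (proj1 subst_l_msubst). simpl. rewrite <- (proj2 lift_m_subst_l). constructor.
Qed.

Lemma star_subst_l_arg :
  (forall t j v v', red v v' -> star (subst_l j v t) (subst_l j v' t)) /\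
  (forall e j v v', red v v' -> stare (subst_le j v e) (subst_le j v' e)).
Proof.
  apply term_eterm_ind; intros; cbn -[Nat.leb Nat.eqb Nat.ltb];
    try apply rt_refl.
  - destruct (n =? j); [apply rt_step; auto | apply rt_refl].
  - star_congr Lam. apply H, red_lift_l; auto.
  - eapply rt_trans.
    + star_congr (fun x => App x (subst_le j v e)). eauto.
    + star_congr (App (subst_l j v' t)). auto.
  - eapply rt_trans.
    + star_congr (fun x => Pair x (subst_l j v t0)). eauto.
    + star_congr (Pair (subst_l j v' t)). auto.
  - star_congr Inj1. auto.
  - star_congr Inj2. auto.
  - star_congr Mu. apply H, red_lift_m; auto.
  - star_congr (MApp n). auto.
  - star_congr ETerm. auto.
  - eapply rt_trans.
    + star_congr (fun x => Case x (subst_l (S j) (lift_l 0 v) t0)). eapply H, red_lift_l; eauto.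
    + star_congr (Case (subst_l (S j) (lift_l 0 v') t)). apply H0, red_lift_l; auto.
Qed.

Lemma red_msubst :
  (forall t t', red t t' -> forall k ws, red (msubst k ws t) (msubst k ws t')) /\
  (forall e e', rede e e' -> forall k ws, rede (msubst_e k ws e) (msubst_e k ws e')).
Proof.
  apply red_rede_ind; intros; cbn -[Nat.leb Nat.eqb Nat.ltb]; try (constructor; auto; fail).
  1-3: rewrite (proj1 msubst_subst_l); constructor.
  - rewrite <- (proj2 lift_l_msubst). constructor.
  - rewrite (proj1 msubst_msubst_comm) by lia. simpl.
    replace (msubst_e (S k) (map (lift_me 0) ws) (lift_me 0 e))
      with (lift_me 0 (msubst_e k ws e)) by (rewrite (proj2 lift_m_msubst); reflexivity).
    constructor.
  - destruct (a =? k); constructor; auto using red_apps.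
Qed.

Lemma star_msubst_seq :
  (forall t k ws ws', red_seq ws ws' -> star (msubst k ws t) (msubst k ws' t)) /\
  (forall e k ws ws', red_seq ws ws' -> stare (msubst_e k ws e) (msubst_e k ws' e)).
Proof.
  assert (Hl : forall ws ws', red_seq ws ws' -> red_seq (map (lift_le 0) ws) (map (lift_le 0) ws'))
    by (apply red_seq_map; intros; apply red_lift_l; auto).
  apply term_eterm_ind; intros; cbn -[Nat.leb Nat.eqb Nat.ltb]; try apply rt_refl.
  - star_congr Lam. auto.
  - eapply rt_trans.
    + star_congr (fun x => App x (msubst_e k ws e)). eauto.
    + star_congr (App (msubst k ws' t)). auto.
  - eapply rt_trans.
    + star_congr (fun x => Pair x (msubst k ws t0)). eauto.
    + star_congr (Pair (msubst k ws' t)). auto.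
  - star_congr Inj1. auto.
  - star_congr Inj2. auto.
  - star_congr Mu. apply H, red_seq_map; auto. intros; apply red_lift_m; auto.
  - destruct (n =? k); star_congr (MApp n); auto.
    eapply rt_trans; [apply star_apps; eauto | apply rt_step, red_apps_seq; auto].
  - star_congr ETerm. auto.
  - eapply rt_trans.
    + star_congr (fun x => Case x (msubst k (map (lift_le 0) ws) t0)). eauto.
    + star_congr (Case (msubst k (map (lift_le 0) ws') t)). auto.
Qed.

Inductive root_red : term -> term -> Prop :=
| root_beta u v : root_red (App (Lam u) (ETerm v)) (subst_l 0 v u)
| root_pi1 t1 t2 : root_red (App (Pair t1 t2) Proj1) t1
| root_pi2 t1 t2 : root_red (App (Pair t1 t2) Proj2) t2
| root_case1 t u1 u2 : root_red (App (Inj1 t) (Case u1 u2)) (subst_l 0 t u1)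
| root_case2 t u1 u2 : root_red (App (Inj2 t) (Case u1 u2)) (subst_l 0 t u2)
| root_comm t u1 u2 e :
    root_red (App (App t (Case u1 u2)) e)
             (App t (Case (App u1 (lift_le 0 e)) (App u2 (lift_le 0 e))))
| root_mu t e : root_red (App (Mu t) e) (Mu (msubst 0 [lift_me 0 e] t)).

Lemma red_App_inv t e s : red (App t e) s ->
  root_red (App t e) s \/
  (exists t', red t t' /\ s = App t' e) \/
  (exists e', rede e e' /\ s = App t e').
Proof. intros H; inversion H; subst; eauto using root_red. Qed.

Definition no_inner_case (ws : list eterm) : Prop :=
  forall i, S i < length ws -> is_case (nth i ws Proj1) = false.

Lemma red_apps_inv ws h s : no_inner_case ws -> red (apps h ws) s ->
  (exists h', red h h' /\ s = apps h' ws) \/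
  (exists ws', red_seq ws ws' /\ s = apps h ws') \/
  (exists w ws0 h', ws = w :: ws0 /\ root_red (App h w) h' /\ s = apps h' ws0).
Proof.
  revert h s; induction ws as [|w ws IH]; intros h s Hws Hr.
  - left; exists s; auto.
  - assert (Hws0 : no_inner_case ws) by (intros i Hi; apply (Hws (S i)); simpl; lia).
    destruct (IH _ _ Hws0 Hr)
      as [[h0 [Hr0 ->]] | [[ws' [Hr0 ->]] | [w1 [ws1 [h' [-> [Hroot ->]]]]]]].
    + destruct (red_App_inv _ _ _ Hr0) as [Hroot | [[h' [Hh ->]] | [w' [Hw ->]]]].
      * right; right; exists w, ws, h0; auto.
      * left; exists h'; auto.
      * right; left; exists (w' :: ws); split; [constructor | ]; auto.
    + right; left; exists (w :: ws'); split; [constructor | ]; auto.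
    + exfalso. inversion Hroot; subst.
      specialize (Hws 0); simpl in Hws; discriminate Hws; lia.
Qed.

Lemma SN_red t t' : SN t -> red t t' -> SN t'.
Proof. intros [Ht] Hr; apply Ht, Hr. Qed.

Lemma SN_star t t' : SN t -> star t t' -> SN t'.
Proof.
  intros Ht Hs; apply clos_rt_rt1n in Hs; induction Hs; eauto using SN_red.
Qed.

Lemma SN_apps_intro h ws : no_inner_case ws ->
  (forall h', red h h' -> SN (apps h' ws)) ->
  (forall ws', red_seq ws ws' -> SN (apps h ws')) ->
  (forall w ws0 h', ws = w :: ws0 -> root_red (App h w) h' -> SN (apps h' ws0)) ->
  SN (apps h ws).
Proof.
  intros Hws Hh Hseq Hroot; constructor; intros s Hr.
  destruct (red_apps_inv _ _ _ Hws Hr)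
    as [[h' [Hr' ->]] | [[ws' [Hr' ->]] | [w [ws0 [h' [-> [Hr' ->]]]]]]].
  - apply Hh, Hr'.
  - apply Hseq, Hr'.
  - eapply Hroot; eauto.
Qed.

Lemma red_seq_length ws ws' : red_seq ws ws' -> length ws = length ws'.
Proof. induction 1; simpl; auto. Qed.

Lemma red_seq_is_case ws ws' : red_seq ws ws' ->
  forall i, is_case (nth i ws Proj1) = is_case (nth i ws' Proj1).
Proof.
  induction 1 as [w w' ws Hw | ]; intros [|i]; simpl; auto.
  inversion Hw; reflexivity.
Qed.

Lemma red_seq_SN' ws ws' : red_seq ws ws' -> Forall SN' ws -> Forall SN' ws'.
Proof.
  induction 1 as [w w' ws Hw | ]; intros HF; inversion_clear HF as [|? ? Hacc]; constructor; auto.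
  destruct Hacc as [Hacc]; apply Hacc, Hw.
Qed.

Lemma nice_red_seq ws ws' : red_seq ws ws' -> nice ws -> nice ws'.
Proof.
  intros Hr [HF Hc]; split.
  - eapply red_seq_SN'; eauto.
  - intros i Hi. rewrite <- (red_seq_is_case _ _ Hr).
    apply Hc. rewrite (red_seq_length _ _ Hr); auto.
Qed.

Lemma nice_tail w ws : nice (w :: ws) -> nice ws.
Proof.
  intros [HF Hc]; split.
  - inversion HF; auto.
  - intros i Hi. apply (Hc (S i)). simpl; lia.
Qed.

Lemma Acc_red_seq ws : Forall SN' ws -> Acc (fun ws' ws => red_seq ws ws') ws.
Proof.
  induction 1 as [|w ws Hw Hws IH].
  - constructor; intros ws' Hr; inversion Hr.
  - revert ws Hws IH; induction Hw as [w _ IHw]; intros ws Hws IH.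
    induction IH as [ws Hacc IHws].
    constructor; intros ws' Hr; inversion Hr; subst.
    + apply IHw; auto. constructor; auto.
    + apply IHws; auto. eapply red_seq_SN'; eauto.
Qed.

Lemma star_subst_l j v t t' : star t t' -> star (subst_l j v t) (subst_l j v t').
Proof. apply clos_refl_trans_map; intros; apply red_subst_l; auto. Qed.

Lemma star_pick_l (i : bool) t1 t1' t2 : red t1 t1' -> star (pick i t1 t2) (pick i t1' t2).
Proof. destruct i; simpl; auto using rt_step, rt_refl. Qed.

Lemma star_pick_r (i : bool) t1 t2 t2' : red t2 t2' -> star (pick i t1 t2) (pick i t1 t2').
Proof. destruct i; simpl; auto using rt_step, rt_refl. Qed.

Lemma SN_var_apps ws x : nice ws -> SN (apps (Var x) ws).
Proof.
  intros Hws; induction (Acc_red_seq ws (proj1 Hws)) as [ws _ IH].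
  apply SN_apps_intro; [exact (proj2 Hws) | | | ].
  - intros h' Hr; inversion Hr.
  - intros ws' Hr; apply IH; eauto using nice_red_seq.
  - intros w ws0 h' _ Hr; inversion Hr.
Qed.

Lemma SN_beta_apps t u ws : nice ws -> SN u -> SN (apps (subst_l 0 u t) ws) ->
  SN (apps (App (Lam t) (ETerm u)) ws).
Proof.
  intros Hws Hu; revert t ws Hws; induction Hu as [u Hu IHu]; intros t ws Hws Hs.
  remember (apps (subst_l 0 u t) ws) as s eqn:Es; revert t ws Hws Es.
  induction Hs as [s Hs IHs]; intros t ws Hws ->.
  apply SN_apps_intro; [exact (proj2 Hws) | | | ].
  - intros h' Hr.
    destruct (red_App_inv _ _ _ Hr) as [Hroot | [[l [Hl ->]] | [e [He ->]]]].
    + inversion Hroot; subst. constructor; exact Hs.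
    + inversion Hl; subst. eapply IHs; eauto. apply red_apps, red_subst_l; assumption.
    + inversion He; subst. eapply IHu; eauto.
      eapply SN_star; [constructor; exact Hs |].
      apply star_apps, star_subst_l_arg; assumption.
  - intros ws' Hr; eapply IHs; eauto using red_apps_seq, nice_red_seq.
  - intros w ws0 h' _ Hr; inversion Hr.
Qed.

Lemma SN_proj_pair_apps (i : bool) t1 t2 ws : nice ws -> SN t1 -> SN t2 ->
  SN (apps (pick i t1 t2) ws) -> SN (apps (App (Pair t1 t2) (proj i)) ws).
Proof.
  intros Hws H1; revert t2 ws Hws; induction H1 as [t1 H1 IH1]; intros t2 ws Hws H2.
  revert ws Hws; induction H2 as [t2 H2 IH2]; intros ws Hws Hs.
  remember (apps (pick i t1 t2) ws) as s eqn:Es; revert ws Hws Es.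
  induction Hs as [s Hs IHs]; intros ws Hws ->.
  apply SN_apps_intro; [exact (proj2 Hws) | | | ].
  - intros h' Hr.
    destruct (red_App_inv _ _ _ Hr) as [Hroot | [[p [Hp ->]] | [e [He ->]]]].
    + destruct i; inversion Hroot; subst; constructor; exact Hs.
    + inversion Hp as [| | | | | | | | | | t1' ? ? Ht1 | ? t2' ? Ht2 | | | | ]; subst.
      * apply IH1; auto; [constructor; exact H2 |].
        eapply SN_star; [constructor; exact Hs |]. apply star_apps, star_pick_l, Ht1.
      * apply IH2; auto.
        eapply SN_star; [constructor; exact Hs |]. apply star_apps, star_pick_r, Ht2.
    + destruct i; inversion He.
  - intros ws' Hr; eapply IHs; eauto using red_apps_seq, nice_red_seq.
  - intros w ws0 h' _ Hr; destruct i; inversion Hr.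
Qed.

Lemma SN_case_inj (i : bool) t u1 u2 : SN t -> SN u1 -> SN u2 ->
  SN (subst_l 0 t (pick i u1 u2)) -> SN (App (inj i t) (Case u1 u2)).
Proof.
  intros Ht; revert u1 u2; induction Ht as [t Ht IHt]; intros u1 u2 H1.
  revert u2; induction H1 as [u1 H1 IH1]; intros u2 H2.
  induction H2 as [u2 H2 IH2]; intros Hs.
  constructor; intros s Hr.
  destruct (red_App_inv _ _ _ Hr) as [Hroot | [[t' [Ht' ->]] | [e [He ->]]]].
  - destruct i; inversion Hroot; subst; exact Hs.
  - assert (exists t0, red t t0 /\ t' = inj i t0) as [t0 [Ht0 ->]]
      by (destruct i; inversion Ht'; eauto).
    apply IHt; auto; try (constructor; assumption).
    eapply SN_star; [exact Hs |]. apply star_subst_l_arg, Ht0.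
  - inversion He; subst.
    + apply IH1; auto; [constructor; assumption |].
      eapply SN_star; [exact Hs |]. apply star_subst_l, star_pick_l; assumption.
    + apply IH2; auto.
      eapply SN_star; [exact Hs |]. apply star_subst_l, star_pick_r; assumption.
Qed.

Lemma SN_mu_apps t ws : nice ws -> SN (msubst 0 (map (lift_me 0) ws) t) -> SN (apps (Mu t) ws).
Proof.
  remember (length ws) as n eqn:En; revert t ws En.
  induction n as [n IHn] using lt_wf_ind; intros t ws En Hws.
  revert t En; induction (Acc_red_seq ws (proj1 Hws)) as [ws _ IHseq]; intros t En Hs.
  remember (msubst 0 (map (lift_me 0) ws) t) as s eqn:Es; revert t En Es.
  induction Hs as [s Hs IHs]; intros t En ->.
  apply SN_apps_intro; [exact (proj2 Hws) | | | ].
  - intros h' Hr; inversion Hr; subst. eapply IHs; eauto. apply red_msubst; assumption.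
  - intros ws' Hr. apply IHseq; eauto using nice_red_seq.
    + rewrite (red_seq_length _ _ Hr) in En; assumption.
    + eapply SN_star; [constructor; exact Hs |].
      apply star_msubst_seq, red_seq_map; auto. intros; apply red_lift_m; assumption.
  - intros w ws0 h' -> Hr; inversion Hr; subst.
    eapply IHn; [| reflexivity | eapply nice_tail; eauto |].
    + simpl; lia.
    + rewrite (proj1 msubst_msubst_app t 0 [w]). constructor; exact Hs.
Qed.

Theorem lemma3 : forall ws : list eterm, nice ws ->
  (* (1) *)
  (forall x : nat, SN (apps (Var x) ws)) /\
  (* (2) *)
  (forall t u : term, SN u -> SN (apps (subst_l 0 u t) ws) ->
     SN (apps (App (Lam t) (ETerm u)) ws)) /\
  (* (3) *)
  (forall (i : bool) (t1 t2 : term), SN t1 -> SN t2 -> SN (apps (pick i t1 t2) ws) ->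
     SN (apps (App (Pair t1 t2) (proj i)) ws)) /\
  (* (4) *)
  (forall (i : bool) (t u1 u2 : term), SN t -> SN u1 -> SN u2 ->
     SN (subst_l 0 t (pick i u1 u2)) ->
     SN (App (inj i t) (Case u1 u2))) /\
  (* (5) *)
  (forall t : term, SN (msubst 0 (map (lift_me 0) ws) t) ->
     SN (apps (Mu t) ws)).
Proof.
  intros ws Hws; split; [| split; [| split; [| split]]].
  - intros x; apply SN_var_apps, Hws.
  - intros t u; apply SN_beta_apps, Hws.
  - intros i t1 t2; apply SN_proj_pair_apps, Hws.
  - apply SN_case_inj.
  - intros t; apply SN_mu_apps, Hws.
Qed.
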